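(* Let $A$ be a set. Let $(G,S)$ and $(H,S)$ be two compatible $d$-labeled boundaried graphs, let $\mathcal{B}$ be the set of blocks of $G[S]$ with at least two vertices, and let $g:\mathcal{B}\to A$ be a function such that (i) each $S$-block of $G$ or $H$ is chordal, (ii) $\mathbf{Aux}(G,S)\oplus\mathbf{Aux}(H,S)$ has no cycles, and (iii) for all $B_1,B_2\in\mathcal{B}$ that are contained in a common $S$-block of $G$ or in a common $S$-block of $H$, $g(B_1)=g(B_2)$. If $F$ is an $S$-block of $(G,S)\oplus(H,S)$ and $B_1,B_2\in\mathcal{B}$ satisfy $V(B_1),V(B_2)\subseteq V(F)$, then $g(B_1)=g(B_2)$.
   Context: A block of a graph is a maximal connected subgraph without a cut vertex; a graph is chordal if it has no induced cycle of length at least $4$. A block $d$-labeling of a graph whose blocks have at most $d$ vertices is a map $V(G)\to[d]$ injective on each block; a $d$-labeled boundaried graph is a pair $(G,S)$ with $S\subseteq V(G)$ and $G$ carrying such a labeling. $(G,S)$ and $(H,S)$ are compatible if $V(G-S)\cap V(H-S)=\emptyset$, $G[S]=H[S]$, and labels agree on $S$. The sum $(G,S)\oplus(H,S)$ is the graph obtained from the disjoint union of $G$ and $H$ by identifying corresponding vertices of $S$ and removing duplicate edges inside $S$. An $S$-block of a graph containing $S$ is a block of it containing an edge of $G[S]$. $\mathbf{Aux}(G,S)$ is the bipartite graph whose vertices are the connected components of $G$ and the connected components of $G[S]$, a component $C_1$ of $G$ adjacent to a component $C_2$ of $G[S]$ iff $C_2\subseteq C_1$; $\mathbf{Aux}(G,S)\oplus\mathbf{Aux}(H,S)$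 is the disjoint union of $\mathbf{Aux}(G,S)$ and $\mathbf{Aux}(H,S)$ with the vertices corresponding to the same component of $G[S]=H[S]$ identified. *)

(* Graphs are finite simple graphs whose vertices live in a
   common finite universe T: a graph is a vertex set V : {set T} together with
   a symmetric irreflexive edge relation e : rel T (edges only inside V).
   A vertex subset X induces the subgraph G[X] with relation irel X e. *)
From mathcomp Require Import all_boot.
Set Implicit Arguments.
Unset Strict Implicit.
Unset Printing Implicit Defensive.

Section GraphDefs.
Variable T : finType.

Definition graph_wf (V : {set T}) (e : rel T) : Prop :=
  [/\ symmetric e, irreflexive e & forall x y, e x y -> x \in V /\ y \in V].

Definition irel (X : {set T}) (e : rel T) : rel T :=
  [rel x y | [&& x \in X, y \in X & e x y]].

Definition connected_in (X : {set T}) (e : rel T) : Prop :=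
  X != set0 /\ {in X &, forall x y, connect (irel X e) x y}.

Definition no_cut_vertex (X : {set T}) (e : rel T) : Prop :=
  forall v, v \in X -> {in X :\ v &, forall x y, connect (irel (X :\ v) e) x y}.

Definition conn_nocut (X : {set T}) (e : rel T) : Prop :=
  connected_in X e /\ no_cut_vertex X e.

Definition is_block (V : {set T}) (e : rel T) (X : {set T}) : Prop :=
  [/\ X \subset V, conn_nocut X e &
      forall Y : {set T}, X \proper Y -> Y \subset V -> ~ conn_nocut Y e].

Definition is_S_block (V : {set T}) (e : rel T) (S X : {set T}) : Prop :=
  is_block V e X /\
  exists x y, [/\ x \in S, y \in S, x \in X, y \in X & e x y].

(* G[X] is chordal: no induced cycle of length at least 4.  A cycle of length
   k is given by c 0, ..., c (k-1) (pairwise distinct, in X). *)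
Definition chordal (X : {set T}) (e : rel T) : Prop :=
  forall (k : nat) (c : nat -> T), 4 <= k ->
    (forall i j, i < k -> j < k -> c i = c j -> i = j) ->
    (forall i, i < k -> c i \in X) ->
    ~ (forall i j, i < k -> j < k ->
         e (c i) (c j) = (j == i.+1 %% k) || (i == j.+1 %% k)).

Definition is_component (V : {set T}) (e : rel T) (C : {set T}) : Prop :=
  exists2 x, x \in V & C = [set y in V | connect (irel V e) x y].

Definition block_labeling (d : nat) (V : {set T}) (e : rel T)
    (l : T -> 'I_d) : Prop :=
  forall X, is_block V e X -> {in X &, injective l}.

(* Vertices are tagged sets: AG C (C a component of G), AH C (C a component
   of H), AS C (C a component of G[S] = H[S], shared by both Aux graphs). *)
Inductive auxtag := AG | AH | AS.

Definition aux_vertex (VG : {set T}) (eG : rel T) (VH : {set T}) (eH : rel T)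
    (S : {set T}) (v : auxtag * {set T}) : Prop :=
  match v.1 with
  | AG => is_component VG eG v.2
  | AH => is_component VH eH v.2
  | AS => is_component S (irel S eG) v.2
  end.

Definition aux_edge (u v : auxtag * {set T}) : Prop :=
  (u.1 <> AS /\ v.1 = AS /\ v.2 \subset u.2) \/
  (v.1 <> AS /\ u.1 = AS /\ u.2 \subset v.2).

Definition aux_sum_acyclic (VG : {set T}) (eG : rel T) (VH : {set T})
    (eH : rel T) (S : {set T}) : Prop :=
  forall (k : nat) (c : nat -> auxtag * {set T}), 3 <= k ->
    (forall i j, i < k -> j < k -> c i = c j -> i = j) ->
    (forall i, i < k -> aux_vertex VG eG VH eH S (c i)) ->
    ~ (forall i, i < k -> aux_edge (c i) (c (i.+1 %% k))).

Definition sum_rel (eG eH : rel T) : rel T := [rel x y | eG x y || eH x y].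

End GraphDefs.

(* Call the blocks of G and of H pieces, and link two pieces when they share a
   block of G[S] with at least two vertices; by (iii), g is constant on the blocks
   of G[S] contained in the pieces of one link-component.

   The core fact is that, for every cycle of (G,S) (+) (H,S), all pieces through
   its edges lie in one link-component.  A cycle inside G or inside H lies in one
   block.  Otherwise it visits g in G - S and h in H - S.  Since
   Aux(G,S) (+) Aux(H,S) is a forest, some component C of G[S] meets every g-h
   path, hence both arcs of the cycle; a path of G[S] between the two arcs gives a
   chord splitting the cycle into two cycles with fewer vertices outside S, and
   the piece through the first edge of the chord joins their link-components.

   Now let F be an S-block of the sum, P1 a block of G containing B1, and U the
   union of the pieces linked to P1.  If F were not inside U, 2-connectivity of F
   would give an ear of F outside U with both ends in U; closed up inside U it is a
   cycle, so the piece through its first edge is linked to P1, a contradiction.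
   An edge of B2 lies in U, and the same argument links P1 to a block containing
   B2. *)
From HB Require Import structures.
From mathcomp Require Import all_boot boolp zify.
Set Implicit Arguments.
Unset Strict Implicit.
Unset Printing Implicit Defensive.

Section Connectivity.
Variable T : finType.
Implicit Types (X Y V W U : {set T}) (e : rel T).

Lemma connect_irel_sub X Y e e' : X \subset Y ->
  {in X &, forall x y, e x y -> e' x y} ->
  forall x y, connect (irel X e) x y -> connect (irel Y e') x y.
Proof.
move=> sXY ee'; apply: connect_sub => x y /and3P[xX yX exy]; apply: connect1.
by rewrite /irel /= (subsetP sXY _ xX) (subsetP sXY _ yX) ee'.
Qed.

Lemma connect_irel_mem X e x y : x \in X -> connect (irel X e) x y -> y \in X.
Proof.
move=> xX /connectP[p + ->]; elim: p x xX => //= z p IH x _.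
by case/andP=> /and3P[_ zX _]; apply: IH.
Qed.

Lemma connect_irel_sym X e : symmetric e -> connect_sym (irel X e).
Proof.
by move=> se; apply: sym_connect_sym => x y; rewrite /irel /= se andbCA.
Qed.

Lemma path_irel X e x p : path e x p -> {subset x :: p <= X} ->
  path (irel X e) x p.
Proof.
elim: p x => //= y p IH x /andP[exy pyp] sub.
have yX : y \in X by apply: sub; rewrite !inE eqxx orbT.
rewrite /irel /= sub ?mem_head // yX exy /=.
by apply: IH => // z zp; apply: sub; rewrite inE zp orbT.
Qed.

Lemma path_connect_irel X e x p : symmetric e -> path e x p ->
  {subset x :: p <= X} -> {in x :: p &, forall y z, connect (irel X e) y z}.
Proof.
move=> se pxp sub y z yp zp; have pX := path_irel pxp sub.
apply: connect_trans (path_connect pX zp).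
by rewrite connect_irel_sym // (path_connect pX yp).
Qed.

Lemma conn_nocut_sub X e e' : {in X &, forall x y, e x y -> e' x y} ->
  conn_nocut X e -> conn_nocut X e'.
Proof.
move=> ee' [[X0 cX] ncX]; split; first split=> // x y xX yX.
  exact: connect_irel_sub (cX x y xX yX).
move=> v vX x y xv yv; apply: connect_irel_sub (ncX v vX x y xv yv) => //.
by move=> a b /setD1P[_ aX] /setD1P[_ bX]; apply: ee'.
Qed.

Lemma conn_nocutD1 X e v : conn_nocut X e ->
  {in X :\ v &, forall x y, connect (irel (X :\ v) e) x y}.
Proof.
case=> [[_ cX] ncX]; have [/ncX //|vX] := boolP (v \in X).
have -> : X :\ v = X.
  by apply/setP => z; rewrite in_setD1 andb_idl // => zX; apply: contraNneq vX => <-.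
exact: cX.
Qed.

Lemma connect_irelU X Y e c : c \in X :&: Y ->
  {in X &, forall x y, connect (irel X e) x y} ->
  {in Y &, forall x y, connect (irel Y e) x y} ->
  {in X :|: Y &, forall x y, connect (irel (X :|: Y) e) x y}.
Proof.
case/setIP=> cX cY cnX cnY.
have via z : z \in X :|: Y ->
    connect (irel (X :|: Y) e) z c /\ connect (irel (X :|: Y) e) c z.
  case/setUP=> [zX|zY].
    by split; apply: connect_irel_sub (subsetUl X Y) _ _ _ (cnX _ _ _ _).
  by split; apply: connect_irel_sub (subsetUr X Y) _ _ _ (cnY _ _ _ _).
by move=> x y /via[xc _] /via[_ cy]; apply: connect_trans xc cy.
Qed.

Lemma conn_nocutU X Y e a b : conn_nocut X e -> conn_nocut Y e ->
  a \in X :&: Y -> b \in X :&: Y -> a != b -> conn_nocut (X :|: Y) e.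
Proof.
move=> cnX cnY aXY bXY ab; split; first split.
- by apply/set0Pn; exists a; rewrite inE (setIP aXY).1.
- by apply: connect_irelU aXY _ _; [case: cnX => [[]] | case: cnY => [[]]].
move=> v _; rewrite setDUl.
pose c := if a == v then b else a.
apply: (@connect_irelU _ _ _ c); try exact: conn_nocutD1.
case/setIP: aXY => aX aY; case/setIP: bXY => bX bY.
rewrite /c; case: eqP => [<-|/eqP av]; rewrite !inE.
  by rewrite eq_sym ab bX bY.
by rewrite av aX aY.
Qed.

Lemma conn_nocut_cycle e s : symmetric e -> uniq s -> cycle e s -> 2 <= size s ->
  conn_nocut [set u in s] e.
Proof.
move=> se us cs ss; split; first split.
- by case: s ss {us cs} => // x p _; apply/set0Pn; exists x; rewrite inE mem_head.
- case: s us cs ss => // x p _ /=; rewrite rcons_path => /andP[pxp _] _ y z.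
  by rewrite !inE; apply: (path_connect_irel se pxp); move=> w; rewrite in_set.
move=> v; rewrite inE => vs; move: us cs ss; case/splitPr: vs => A B us cs ss.
have cs' : cycle e (v :: B ++ A) by rewrite -cat_cons cycle_catC.
have us' : uniq (v :: B ++ A) by rewrite -cat_cons uniq_catC.
have -> : [set u in A ++ v :: B] :\ v = [set u in B ++ A].
  apply/setP => w; rewrite !inE !mem_cat inE; case: (w =P v) => [->|_] /=.
    by move: us'; rewrite cons_uniq mem_cat => /andP[/negbTE].
  by rewrite orbC.
have : 0 < size (B ++ A) by move: ss; rewrite !size_cat /=; lia.
case: (B ++ A) cs' => // h r /= /andP[_]; rewrite rcons_path => /andP[phr _] _ y z.
by rewrite !inE; apply: (path_connect_irel se phr); move=> w; rewrite in_set.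
Qed.

Lemma conn_nocut_edge e u v : symmetric e -> e u v -> u != v ->
  conn_nocut [set u; v] e.
Proof.
move=> se euv uv; have -> : [set u; v] = [set w in [:: u; v]].
  by apply/setP => w; rewrite !inE.
by apply: conn_nocut_cycle => //=; rewrite ?inE ?uv // euv se euv.
Qed.

Lemma block_exists V e X : conn_nocut X e -> X \subset V ->
  exists2 B, is_block V e B & X \subset B.
Proof.
move=> cnX sXV.
pose ext Y := `[< [/\ X \subset Y, Y \subset V & conn_nocut Y e] >].
have extX : ext X by apply/asboolP; split.
case: (arg_maxnP (fun Y => #|Y|) extX) => B /asboolP[sXB sBV cnB] maxB.
exists B => //; split=> // Y /[dup] /proper_card ltBY /proper_sub sBY sYV cnY.
have /maxB : ext Y by apply/asboolP; split=> //; apply: subset_trans sBY.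
by move/(leq_trans ltBY); rewrite ltnn.
Qed.

Lemma block_sub_conn V e X Y a b : is_block V e X -> conn_nocut Y e ->
  Y \subset V -> a \in X :&: Y -> b \in X :&: Y -> a != b -> Y \subset X.
Proof.
case=> sXV cnX maxX cnY sYV aXY bXY ab; apply/negPn/negP => nYX.
apply: (maxX (X :|: Y)); last exact: conn_nocutU aXY bXY ab.
- by rewrite properE subsetUl; apply: contra nYX => /(subset_trans (subsetUr X Y)).
- by rewrite subUset sXV.
Qed.

Lemma block_eq V e X Y a b : is_block V e X -> is_block V e Y ->
  a \in X :&: Y -> b \in X :&: Y -> a != b -> X = Y.
Proof.
move=> bX bY aXY bXY ab; case: (bX) (bY) => sXV cnX _ [sYV cnY _].
have sYX := block_sub_conn bX cnY sYV aXY bXY ab.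
rewrite setIC in aXY bXY; have sXY := block_sub_conn bY cnX sXV aXY bXY ab.
by apply/eqP; rewrite eqEsubset sXY sYX.
Qed.

Lemma cycle_in_block V e e' s : symmetric e -> {in V &, forall x y, e' x y -> e x y} ->
  uniq s -> 2 <= size s -> cycle e' s -> {subset s <= V} ->
  exists2 X, is_block V e X & {subset s <= X}.
Proof.
move=> se e'e us ss cs sV; have aV : all (mem V) s by apply/allP.
have sV' : [set u in s] \subset V by apply/subsetP => v; rewrite inE => /sV.
have [X bX sX] := block_exists (conn_nocut_cycle se us (sub_in_cycle e'e aV cs) ss) sV'.
by exists X => // v vs; apply: (subsetP sX); rewrite inE.
Qed.

Lemma connect_irel_path X e x y : x \in X -> connect (irel X e) x y ->
  exists p, [/\ path e x p, last x p = y, uniq (x :: p) & {subset x :: p <= X}].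
Proof.
move=> xX /connectP[p0 + ->]; case/shortenP=> p pp up _ {p0}; exists p; split=> //.
- by apply: sub_path pp => u v /and3P[].
- by move=> v /(path_connect pp); apply: connect_irel_mem.
Qed.

Lemma path_exit X W e y p : path (irel X e) y p -> y \notin W -> last y p \in W ->
  exists w d, [/\ w \in W :&: X, connect (irel (X :\: W) e) y d, d \in X :\: W & e d w].
Proof.
elim: p y => [|z p IH] y /=; first by move=> _ /negbTE->.
case/andP=> /and3P[yX zX eyz] pzp yW lW; have [zW|zW] := boolP (z \in W).
  by exists z, y; rewrite !inE yW yX zW zX connect0.
have [w [d [wWX yd dXW edw]]] := IH z pzp zW lW; exists w, d; split=> //.
by apply: connect_trans yd; apply: connect1; rewrite /irel /= !inE yW zW yX zX.
Qed.

Lemma conn_nocut_ear X U e a b : symmetric e -> conn_nocut X e ->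
  a \in X :&: U -> b \in X :&: U -> a != b -> ~~ (X \subset U) ->
  exists w1 w2 p, [/\ w1 \in U, w2 \in U, p != [::] & {subset p <= ~: U}] /\
    path e w1 (rcons p w2) && uniq (w1 :: rcons p w2).
Proof.
move=> se cnX /setIP[aX aU] /setIP[bX bU] ab /subsetPn[y yX yU].
have [[_ cX] ncX] := cnX.
have /connectP[p1 py1 ly1] := cX y a yX aX.
have := path_exit py1 yU; rewrite -ly1 => /(_ aU)[w1 [d1 [/setIP[w1U w1X] yd1 d1XU ed1w1]]].
pose c := if a == w1 then b else a.
have cXw1 : c \in X :\ w1.
  by rewrite /c; case: eqP => [<-|/eqP aw1]; rewrite !inE ?aX ?bX ?andbT // eq_sym.
have yXw1 : y \in X :\ w1 by rewrite !inE yX andbT; apply: contraNneq yU => ->.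
have /connectP[p2 py2 ly2] := ncX w1 w1X y c yXw1 cXw1.
have cU : c \in U by rewrite /c; case: ifP.
have := path_exit py2 yU; rewrite -ly2 => /(_ cU)[w2 [d2 [/setIP[w2U w2Xw1] yd2 d2XU ed2w2]]].
have /connect_irel_path[//|E [pE lE uE EXU]] : connect (irel (X :\: U) e) d1 d2.
  apply: connect_trans (connect_irel_sub _ _ yd2) => //; last first.
    by apply: setSD; apply: subD1set.
  by rewrite connect_irel_sym.
have notU v : v \in d1 :: E -> v \notin U by move/EXU; rewrite inE => /andP[].
exists w1, w2, (d1 :: E); split; first by split=> // v /notU; rewrite inE.
have w1E : w1 \notin d1 :: E by apply/negP => /notU; rewrite w1U.
have w2E : w2 \notin d1 :: E by apply/negP => /notU; rewrite w2U.
apply/andP; split; first by rewrite rcons_path /= se ed1w1 pE lE ed2w2.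
by rewrite -rcons_cons rcons_uniq cons_uniq in_cons negb_or w1E w2E uE (setD1P w2Xw1).1.
Qed.

Definition comp V e (v : T) := [set y in V | connect (irel V e) v y].

Lemma comp_component V e (v : T) : v \in V -> is_component V e (comp V e v).
Proof. by exists v. Qed.

Lemma mem_comp V e (v : T) : v \in V -> v \in comp V e v.
Proof. by rewrite inE connect0 => ->. Qed.

Lemma comp_connect V e (u v : T) : symmetric e -> connect (irel V e) u v ->
  comp V e u = comp V e v.
Proof.
move=> se cuv; apply/setP => y; rewrite !inE; case: (y \in V) => //=.
apply/idP/idP; last exact: connect_trans.
by apply: connect_trans; rewrite connect_irel_sym.
Qed.

End Connectivity.

Section CycleEdges.
Variable T : eqType.
Implicit Types (e : rel T) (s p : seq T).

Lemma path_rcons_rev e x p y : symmetric e ->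
  path e x (rcons p y) -> path e y (rcons (rev p) x).
Proof.
move=> se; have := rev_path e x (rcons p y).
rewrite last_rcons belast_rcons rev_cons => ->.
by rewrite (@eq_path _ _ e) // => a b; rewrite /= se.
Qed.

Lemma mem_pairmap_pair x p u v : (u, v) \in pairmap pair x p ->
  (u \in x :: p) && (v \in p).
Proof.
elim: p x => //= y p IH x; rewrite inE => /orP[/eqP[-> ->]|/IH].
  by rewrite !inE !eqxx.
by rewrite !inE => /andP[-> ->]; rewrite !orbT.
Qed.

Lemma path_pairmap_pair e x p u v : path e x p -> (u, v) \in pairmap pair x p ->
  e u v.
Proof.
elim: p x => //= y p IH x /andP[exy pyp]; rewrite inE.
by case/orP=> [/eqP[-> ->] //|]; apply: IH.
Qed.

Definition cycle_edges s : seq (T * T) :=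
  if s is x :: p then pairmap pair x (rcons p x) else [::].

Lemma mem_cycle_edges s u v : (u, v) \in cycle_edges s -> (u \in s) && (v \in s).
Proof.
case: s => //= x p /mem_pairmap_pair/andP[].
by rewrite !inE !mem_rcons !inE orbA orbb => -> ->.
Qed.

Lemma cycle_edges_rel e s u v : cycle e s -> (u, v) \in cycle_edges s -> e u v.
Proof. by case: s => //= x p; apply: path_pairmap_pair. Qed.

Lemma cycle_edges_catC s1 s2 : cycle_edges (s1 ++ s2) =i cycle_edges (s2 ++ s1).
Proof.
case: s1 => [|x s1]; first by rewrite cats0.
case: s2 => [|v s2]; first by rewrite cats0.
move=> uv; rewrite /= !rcons_cat !rcons_cons -!cat_rcons !pairmap_cat !last_rcons.
by rewrite !mem_cat orbC.
Qed.

Lemma cycle_edges_head x s : (x, head x s) \in cycle_edges (x :: s).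
Proof. by case: s => [|y s]; rewrite /= mem_head. Qed.

Lemma cycle_edges_mid x L w R : (w, head x R) \in cycle_edges (x :: L ++ w :: R).
Proof.
rewrite /= rcons_cat pairmap_cat mem_cat /=; apply/orP; right.
by case: R => [|r R]; rewrite /= !inE eqxx orbT.
Qed.

Lemma cycle_edges_last x s : (last x s, x) \in cycle_edges (x :: s).
Proof. by rewrite /= -cats1 pairmap_cat mem_cat mem_head orbT. Qed.

Section Theta.
Variables (x y : T) (L1 L2 I : seq T).
Let s := x :: L1 ++ y :: L2.
Let s1 := x :: L1 ++ y :: rev I.
Let s2 := y :: L2 ++ x :: I.

Lemma theta_uniq : uniq s -> uniq (x :: rcons I y) -> all [predC s] I ->
  uniq s1 && uniq s2.
Proof.
move=> us uI dI; have {}uI : uniq I by move: uI; rewrite /= rcons_uniq => /and3P[].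
have [uL1 uL2] : uniq (x :: rcons L1 y) /\ uniq (y :: rcons L2 x).
  split; [move: us | have: uniq (y :: L2 ++ x :: L1) by rewrite -cat_cons uniq_catC].
    by rewrite /s -cat_rcons -cat_cons cat_uniq => /andP[].
  by rewrite -cat_rcons -cat_cons cat_uniq => /andP[].
have notI v : v \in I -> v \notin s by move=> vI; apply: (allP dI).
rewrite /s1 /s2 -!cat_rcons -!cat_cons !cat_uniq rev_uniq uL1 uL2 uI /= !andbT.
apply/andP; split; apply/hasPn => v; rewrite ?mem_rev => /notI; apply: contra.
  by rewrite /s -cat_rcons -cat_cons mem_cat => ->.
by rewrite /s !inE !mem_cat !inE mem_rcons !inE => /or3P[->|->|->]; rewrite ?orbT.
Qed.

Lemma theta_cycle e : symmetric e -> cycle e s -> path e x (rcons I y) ->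
  cycle e s1 && cycle e s2.
Proof.
move=> se; rewrite /s /s1 /s2 /= !rcons_cat /= -!cat_rcons !cat_path !last_rcons.
by case/andP=> -> -> pI; rewrite (path_rcons_rev se pI) pI.
Qed.

Lemma theta_edges : {subset cycle_edges s <= cycle_edges s1 ++ cycle_edges s2}.
Proof.
move=> uv; rewrite /s /s1 /s2 /= !rcons_cat !rcons_cons -!cat_rcons !pairmap_cat.
by rewrite !last_rcons !mem_cat => /orP[] ->; rewrite ?orbT.
Qed.

Lemma theta_count (P : pred T) : count P I = 0 -> 0 < count P L1 -> 0 < count P L2 ->
  count P s1 < count P s /\ count P s2 < count P s.
Proof. by rewrite /s /s1 /s2 /= !count_cat /= count_rev => -> ? ?; split; lia. Qed.

Lemma theta_chord :
  ((x, head y I) \in cycle_edges s2) && ((head y I, x) \in cycle_edges s1).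
Proof.
rewrite cycle_edges_mid; have -> : head y I = last x (L1 ++ y :: rev I).
  by rewrite last_cat /=; case: I => //= i J; rewrite rev_cons last_rcons.
exact: cycle_edges_last.
Qed.
End Theta.

Lemma uniq_ear x p y q : uniq (x :: rcons p y) -> uniq (y :: rcons q x) ->
  {in q, forall v, v \notin p} -> uniq (x :: p ++ y :: q).
Proof.
move=> uxpy; rewrite -rcons_cons rcons_uniq cons_uniq inE negb_or.
case/andP=> /andP[_ xq] /andP[yq uq] qp.
rewrite -cat_cons -cat_rcons cat_uniq uxpy uq andbT.
apply/hasPn => v vq; rewrite inE mem_rcons !inE !negb_or (qp v vq) andbT.
by apply/andP; split; [apply: contraNneq xq | apply: contraNneq yq] => <-.
Qed.

Lemma cycle_ear e x p y q : path e x (rcons p y) -> path e y (rcons q x) ->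
  cycle e (x :: p ++ y :: q).
Proof. by rewrite /= rcons_cat /= -cat_rcons cat_path last_rcons => -> ->. Qed.

Lemma cycle_nth e s x0 i : cycle e s -> i < size s ->
  e (nth x0 s i) (nth x0 s (i.+1 %% size s)).
Proof.
case: s => // x p /= /(pathP x0)/(_ i) + ilt; rewrite size_rcons => /(_ ilt).
rewrite -rcons_cons !nth_rcons /= ilt.
have [ip|pi] := ltnP i (size p); first by rewrite modn_small.
have -> : i = size p by apply/eqP; rewrite eqn_leq pi -ltnS ilt.
by rewrite eqxx modnn.
Qed.

Lemma split_crossing (A B : pred T) x Q : (forall y, A y -> ~~ B y) ->
  A x -> B (last x Q) ->
  exists Q1 z1 I z2 Q2, x :: Q = Q1 ++ z1 :: I ++ z2 :: Q2 /\
    [/\ A z1, B z2 & all (fun v => ~~ (A v || B v)) I].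
Proof.
move=> nAB; elim: Q x => [|y Q IH] x Ax /=; first by move/negP: (nAB x Ax).
case By: (B y); first by exists [::], x, [::], y, Q.
case Ay: (A y) => Bl.
  have [Q1 [z1 [I [z2 [Q2 [-> zAB]]]]]] := IH y Ay Bl.
  by exists (x :: Q1), z1, I, z2, Q2.
have {}Bl : B (last x Q) by case: Q Bl {IH} => //=; rewrite By.
have [Q1 [z1 [I [z2 [Q2 [+ [Az1 Bz2 nI]]]]]]] := IH x Ax Bl.
case: Q1 => [|x' Q1] /= [Ex EQ].
  by exists [::], z1, (y :: I), z2, Q2; rewrite Ex EQ /= Ay By.
by exists [:: x, y & Q1], z1, I, z2, Q2; rewrite Ex EQ.
Qed.

Lemma path_crossing e (A B : pred T) x Q : (forall y, A y -> ~~ B y) ->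
  path e x Q -> uniq (x :: Q) -> A x -> B (last x Q) ->
  exists z1 I z2, [/\ A z1, B z2 & all (fun v => ~~ (A v || B v)) I] /\
    [/\ {subset I <= x :: Q}, path e z1 (rcons I z2) & uniq (z1 :: rcons I z2)].
Proof.
move=> nAB pQ uQ Ax Bl.
have [Q1 [z1 [I [z2 [Q2 [EQ [Az1 Bz2 nI]]]]]]] := split_crossing nAB Ax Bl.
exists z1, I, z2; split=> //; split.
- by move=> v vI; rewrite EQ mem_cat inE mem_cat vI !orbT.
- move: pQ; rewrite -/(sorted e (x :: Q)) EQ sorted_cat_cons => /andP[_].
  by rewrite -cat_rcons cat_path => /andP[].
- move: uQ; rewrite EQ cat_uniq -cat_rcons -cat_cons cat_uniq.
  by case/and3P=> _ _ /andP[].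
Qed.
End CycleEdges.

Section Forest.
Variables (N : finType) (r : rel N).
Hypothesis r_sym : symmetric r.

Definition acyclic := forall s, uniq s -> 3 <= size s -> ~~ cycle r s.

Lemma acyclic_cut x c p : acyclic -> path r x (c :: p) -> uniq [:: x, c & p] ->
  p != [::] -> ~~ connect (irel [set~ c] r) x (last c p).
Proof.
move=> acyc /= /andP[rxc pcp] uxp p0; apply/negP => conn.
case: p p0 pcp uxp conn => // n p _ /= /andP[rcn pnp].
rewrite !inE !negb_or => /andP[/and3P[xc xn _] /and3P[/andP[cn cp] _ _]] conn.
have /connect_irel_path[|q [pq lq uq qX]] : connect (irel [set~ c] r) x n.
- apply: connect_trans conn _; rewrite connect_irel_sym //.
  apply: path_connect (mem_last n p); apply: path_irel pnp _ => v.
  by rewrite !inE => /orP[/eqP->|/(memPn cp)]; rewrite // eq_sym.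
- by rewrite !inE.
have uc : uniq [:: c, x & q].
  by rewrite cons_uniq uq andbT; apply/negP => /qX; rewrite !inE eqxx.
have sc : 3 <= size [:: c, x & q].
  by case: q lq {pq uq qX uc} => [/= xn'|]; [move: xn; rewrite xn' eqxx | ].
move/negP: (acyc _ uc sc); apply.
by rewrite /= rcons_path pq lq r_sym rxc r_sym rcn.
Qed.
End Forest.

Definition auxtag_code (t : auxtag) : option bool :=
  match t with AG => Some true | AH => Some false | AS => None end.
Definition auxtag_decode (o : option bool) : auxtag :=
  match o with Some true => AG | Some false => AH | None => AS end.
Lemma auxtag_codeK : cancel auxtag_code auxtag_decode. Proof. by case. Qed.
HB.instance Definition _ := Finite.copy auxtag (can_type auxtag_codeK).

Section SumGraph.
Variables (T : finType) (VG : {set T}) (eG : rel T) (VH : {set T}) (eH : rel T).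
Variable S : {set T}.
Hypotheses (wfG : graph_wf VG eG) (wfH : graph_wf VH eH).
Hypotheses (SG : S \subset VG) (SH : S \subset VH) (GHS : VG :&: VH \subset S).
Hypothesis eGH_S : {in S &, forall x y, eG x y = eH x y}.
Implicit Types (V : {set T}) (e : rel T).

Local Notation K := (sum_rel eG eH).
Local Notation eS := (irel S eG).

Lemma eG_sym : symmetric eG. Proof. by case: wfG. Qed.
Lemma eH_sym : symmetric eH. Proof. by case: wfH. Qed.
Lemma K_sym : symmetric K. Proof. by move=> x y; rewrite /sum_rel /= eG_sym eH_sym. Qed.
Lemma eS_sym : symmetric eS. Proof. by move=> x y; rewrite /irel /= eG_sym andbCA. Qed.

Lemma eG_mem x y : eG x y -> (x \in VG) && (y \in VG).
Proof. by case: wfG => _ _ /[apply] -[-> ->]. Qed.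
Lemma eH_mem x y : eH x y -> (x \in VH) && (y \in VH).
Proof. by case: wfH => _ _ /[apply] -[-> ->]. Qed.

Lemma K_neq x y : K x y -> x != y.
Proof.
case: wfG wfH => _ irrG _ [_ irrH _]; apply: contraTneq => ->.
by rewrite /sum_rel /= irrG irrH.
Qed.

Lemma VG_VH_S x : x \in VG -> x \in VH -> x \in S.
Proof. by move=> xG xH; apply: (subsetP GHS); rewrite inE xG xH. Qed.

Lemma K_VG : {in VG &, forall x y, K x y -> eG x y}.
Proof.
move=> x y xG yG /orP[//|exy]; have /andP[xH yH] := eH_mem exy.
by rewrite eGH_S ?VG_VH_S.
Qed.

Lemma K_VH : {in VH &, forall x y, K x y -> eH x y}.
Proof.
move=> x y xH yH /orP[exy|//]; have /andP[xG yG] := eG_mem exy.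
by rewrite -eGH_S ?VG_VH_S.
Qed.

Lemma eS_eH x y : eS x y -> eH x y.
Proof. by case/and3P=> xS yS; rewrite eGH_S. Qed.

Definition aux_rel : rel (auxtag * {set T}) := fun u v =>
  `[< [/\ aux_vertex VG eG VH eH S u, aux_vertex VG eG VH eH S v & aux_edge u v] >].

Lemma aux_rel_sym : symmetric aux_rel.
Proof.
move=> u v; apply/asboolP/asboolP => -[uA vA uv]; split=> //;
  by case: uv => ?; [right | left].
Qed.

Lemma acyclic_aux_rel : aux_sum_acyclic VG eG VH eH S -> acyclic aux_rel.
Proof.
move=> acyc s us ss; apply/negP => cs; pose x0 := (AS, set0 : {set T}).
apply: (acyc (size s) (nth x0 s)) => // [i j ilt jlt /eqP|i ilt|i ilt].
- by rewrite nth_uniq // => /eqP.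
- by have /asboolP[] := cycle_nth x0 cs ilt.
- by have /asboolP[] := cycle_nth x0 cs ilt.
Qed.

Definition aux_node v :=
  if v \in S then (AS, comp S eS v)
  else if v \in VG then (AG, comp VG eG v) else (AH, comp VH eH v).

Lemma aux_node_AS v C : aux_node v = (AS, C) -> v \in C.
Proof.
by rewrite /aux_node; case: ifP => [vS [<-]|_]; [apply: mem_comp | case: ifP].
Qed.

Lemma comp_S_sub V e u v : (forall x y, eS x y -> e x y) -> S \subset V ->
  connect (irel V e) v u -> comp S eS u \subset comp V e v.
Proof.
move=> eSe SV vu; apply/subsetP => y; rewrite !inE => /andP[yS uy].
rewrite (subsetP SV _ yS).
exact: connect_trans vu (connect_irel_sub SV (fun x y _ _ => eSe x y) uy).
Qed.

Lemma aux_node_boundary u v : u \in S -> v \notin S -> K u v ->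
  aux_rel (aux_node u) (aux_node v).
Proof.
move=> uS vS; have nu : aux_node u = (AS, comp S eS u) by rewrite /aux_node uS.
case/orP=> [e|e].
  have /andP[uG vG] := eG_mem e.
  have nv : aux_node v = (AG, comp VG eG v) by rewrite /aux_node (negbTE vS) vG.
  apply/asboolP; rewrite nu nv; split; try exact: comp_component.
  right; split=> //; split=> //; apply: comp_S_sub => // [x y /and3P[] //|].
  by apply: connect1; rewrite /irel /= vG uG eG_sym.
have /andP[uH vH] := eH_mem e.
have vG : v \notin VG by apply: contra vS => vG; apply: VG_VH_S.
have nv : aux_node v = (AH, comp VH eH v) by rewrite /aux_node (negbTE vS) (negbTE vG).
apply/asboolP; rewrite nu nv; split; try exact: comp_component.
right; split=> //; split=> //; apply: comp_S_sub => // [x y /eS_eH //|].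
by apply: connect1; rewrite /irel /= vH uH eH_sym.
Qed.

Lemma aux_node_step u v : K u v ->
  aux_node u = aux_node v \/ aux_rel (aux_node u) (aux_node v).
Proof.
move=> euv; case uS: (u \in S); case vS: (v \in S).
- left; rewrite /aux_node uS vS; congr (_, _); apply: comp_connect; first exact: eS_sym.
  by apply: connect1; rewrite /irel /= uS vS /=; case/orP: euv => // e; rewrite eGH_S.
- by right; apply: aux_node_boundary; rewrite ?vS.
- by right; rewrite aux_rel_sym; apply: aux_node_boundary; rewrite ?uS // K_sym.
left; case/orP: euv => e.
  have /andP[uG vG] := eG_mem e; rewrite /aux_node uS vS uG vG.
  by congr (_, _); apply/comp_connect/connect1; rewrite /irel /= ?uG ?vG ?e //; apply: eG_sym.
have /andP[uH vH] := eH_mem e.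
have [uG vG] : u \notin VG /\ v \notin VG.
  by split; apply/negP => /VG_VH_S; rewrite ?uS ?vS; [move/(_ uH) | move/(_ vH)].
rewrite /aux_node uS vS (negbTE uG) (negbTE vG).
by congr (_, _); apply/comp_connect/connect1; rewrite /irel /= ?uH ?vH ?e //; apply: eH_sym.
Qed.

Lemma aux_walk (X : {set auxtag * {set T}}) x q : path K x q ->
  (forall v, v \in x :: q -> aux_node v \in X) ->
  connect (irel X aux_rel) (aux_node x) (aux_node (last x q)).
Proof.
elim: q x => [|y q IH] x /=; first by rewrite connect0.
case/andP=> exy pyq sub; apply: connect_trans (IH y pyq _); last first.
  by move=> v vq; apply: sub; rewrite inE vq orbT.
have [->|rxy] := aux_node_step exy; first exact: connect0.
apply: connect1; rewrite /irel /= rxy andbT.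
by rewrite (sub x (mem_head _ _)) (sub y); rewrite // !inE eqxx orbT.
Qed.

Hypothesis aux_acyclic : aux_sum_acyclic VG eG VH eH S.

Lemma aux_separation g h q0 :
  g \in VG -> g \notin S -> h \in VH -> h \notin S -> path K g q0 -> last g q0 = h ->
  exists2 C, is_component S eS C & forall q, path K g q -> last g q = h -> has (mem C) q.
Proof.
move=> gG gS hH hS pq0 lq0.
have hG : h \notin VG by apply: contra hS => hG; apply: VG_VH_S.
have ng : aux_node g = (AG, comp VG eG g) by rewrite /aux_node (negbTE gS) gG.
have nh : aux_node h = (AH, comp VH eH h) by rewrite /aux_node (negbTE hS) (negbTE hG).
(* C is the first node after g's on a simple Aux path to h's node: in a forest,
   deleting it separates the two. *)
have := aux_walk (X := setT) pq0 (fun v _ => in_setT _); rewrite lq0.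
case/connect_irel_path=> [|p [pp lp up _]]; first exact: in_setT.
case: p pp lp up => [|[t C] p] /=; first by rewrite ng nh.
case/andP=> gCrel pCp lp up; have /asboolP[_ CC gC] := gCrel.
have tAS : t = AS by move: gC; rewrite ng => -[[_ []]|[_ []]].
subst t; have p0 : p != [::] by case: p lp {pCp up} => //= E; move: E; rewrite nh.
have /(acyclic_cut aux_rel_sym (acyclic_aux_rel aux_acyclic))/(_ up p0) : path aux_rel (aux_node g) ((AS, C) :: p).
  by rewrite /= gCrel.
rewrite lp => cut; exists C => // q pq lq; apply/negPn/negP => Cq; move/negP: cut; apply.
rewrite -lq; apply: aux_walk pq _ => v; rewrite !inE => /orP[/eqP->|vq].
  by rewrite ng xpair_eqE.
by apply: contraNneq Cq => /aux_node_AS vC; apply/hasP; exists v.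
Qed.

Definition piece P := is_block VG eG P \/ is_block VH eH P.
Definition boundary_block B := is_block S eS B /\ 1 < #|B|.
Definition link : rel {set T} := fun P Q =>
  `[< [/\ piece P, piece Q & exists2 B, boundary_block B & B \subset P :&: Q] >].
Definition piece_through u v P := [/\ piece P, u \in P & v \in P].

Lemma link_sym : symmetric link.
Proof.
move=> P Q; apply/asboolP/asboolP => -[pP pQ [B bB sB]];
  by split=> //; exists B; rewrite // setIC.
Qed.

Lemma connect_link_sym : connect_sym link.
Proof. exact: sym_connect_sym link_sym. Qed.

Lemma piece_conn_nocut P : piece P -> conn_nocut P K.
Proof.
by case=> -[_ cnP _]; apply: conn_nocut_sub cnP => x y _ _ exy; rewrite /sum_rel /= exy ?orbT.
Qed.

Lemma boundary_block_sub B P u v : boundary_block B -> piece P ->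
  u \in B :&: P -> v \in B :&: P -> u != v -> B \subset P.
Proof.
move=> [[sBS cnB _] _] pP; rewrite ![B :&: P]setIC => uBP vBP uv.
case: pP => bP; apply: (block_sub_conn bP _ _ uBP vBP uv).
- by apply: (conn_nocut_sub _ cnB) => x y _ _ /and3P[].
- exact: subset_trans SG.
- by apply: (conn_nocut_sub _ cnB) => x y _ _ /eS_eH.
- exact: subset_trans SH.
Qed.

Lemma boundary_block_of_edge u v : u \in S -> v \in S -> eG u v ->
  exists2 B, boundary_block B & (u \in B) && (v \in B).
Proof.
move=> uS vS e; have uv : u != v by apply: K_neq; rewrite /sum_rel /= e.
have euv : eS u v by rewrite /irel /= uS vS.
have sS : [set u; v] \subset S by apply/subsetP => w; rewrite !inE => /orP[]/eqP->.
have [B bB /subsetP sB] := block_exists (conn_nocut_edge eS_sym euv uv) sS.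
have [uB vB] : u \in B /\ v \in B by rewrite !sB ?inE ?eqxx ?orbT.
by exists B; rewrite ?uB //; split=> //; apply/card_gt1P; exists u, v.
Qed.

Lemma link_of_Sedge u v P Q : u \in S -> v \in S -> eG u v ->
  piece_through u v P -> piece_through u v Q -> link P Q.
Proof.
move=> uS vS e [pP uP vP] [pQ uQ vQ].
have uv : u != v by apply: K_neq; rewrite /sum_rel /= e.
have [B bB /andP[uB vB]] := boundary_block_of_edge uS vS e.
have sBX X : piece X -> u \in X -> v \in X -> B \subset X.
  by move=> pX uX vX; apply: (boundary_block_sub bB pX (u := u) (v := v)); rewrite // inE ?uB ?vB.
by apply/asboolP; split=> //; exists B; rewrite // subsetI !sBX.
Qed.

Lemma piece_of_edge u v : K u v -> exists P, piece_through u v P.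
Proof.
move=> euv; have uv := K_neq euv.
have s2 V : u \in V -> v \in V -> [set u; v] \subset V.
  by move=> uV vV; apply/subsetP => w; rewrite !inE => /orP[]/eqP->.
case/orP: euv => e.
  have /andP[uG vG] := eG_mem e.
  have [P bP /subsetP sP] := block_exists (conn_nocut_edge eG_sym e uv) (s2 _ uG vG).
  by exists P; split; [left | apply: sP; rewrite !inE eqxx ?orbT ..].
have /andP[uH vH] := eH_mem e.
have [P bP /subsetP sP] := block_exists (conn_nocut_edge eH_sym e uv) (s2 _ uH vH).
by exists P; split; [right | apply: sP; rewrite !inE eqxx ?orbT ..].
Qed.

Lemma piece_through_sym u v P : piece_through u v P -> piece_through v u P.
Proof. by case. Qed.

Lemma piece_through_link u v P X : K u v ->
  piece_through u v P -> piece_through u v X -> connect link P X.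
Proof.
move=> euv tP tX; have uv := K_neq euv.
have inV V e Y w : is_block V e Y -> w \in Y -> w \in V by case=> /subsetP sYV _ _ /sYV.
have : P = X \/ u \in S /\ v \in S.
  case: tP tX => -[bP|bP] uP vP [[bX|bX] uX vX]; [left|right|right|left];
    try by split; apply: VG_VH_S; apply: inV; eassumption.
  - by apply: (block_eq bP bX (a := u) (b := v)); rewrite ?inE ?uP ?uX ?vP ?vX.
  - by apply: (block_eq bP bX (a := u) (b := v)); rewrite ?inE ?uP ?uX ?vP ?vX.
case=> [->|[uS vS]]; first exact: connect0.
exact: connect1 (link_of_Sedge uS vS (K_VG (subsetP SG _ uS) (subsetP SG _ vS) euv) tP tX).
Qed.

Definition coherent s := exists R, forall u v P,
  (u, v) \in cycle_edges s -> piece_through u v P -> connect link P R.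

Lemma coherent_in_piece X s : piece X -> {subset s <= X} -> cycle K s -> coherent s.
Proof.
move=> pX sX cs; exists X => u v P uv tP; have /andP[us vs] := mem_cycle_edges uv.
by apply: piece_through_link (cycle_edges_rel cs uv) tP _; split; rewrite ?sX.
Qed.

Lemma cycle_in_piece s : uniq s -> 2 <= size s -> cycle K s ->
  {subset s <= VG} \/ {subset s <= VH} -> exists2 X, piece X & {subset s <= X}.
Proof.
move=> us ss cs [sV|sV].
  by have [X bX sX] := cycle_in_block eG_sym K_VG us ss cs sV; exists X => //; left.
by have [X bX sX] := cycle_in_block eH_sym K_VH us ss cs sV; exists X => //; right.
Qed.

Lemma coherent_catC s1 s2 : coherent (s2 ++ s1) -> coherent (s1 ++ s2).
Proof. by case=> R cR; exists R => u v P; rewrite cycle_edges_catC; apply: cR. Qed.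

Lemma coherent_chord x L1 y L2 I : path K x (rcons I y) ->
  coherent (x :: L1 ++ y :: rev I) -> coherent (y :: L2 ++ x :: I) ->
  coherent (x :: L1 ++ y :: L2).
Proof.
move=> pI [R1 cR1] [R2 cR2].
have [P tP] : exists P, piece_through x (head y I) P.
  by apply: piece_of_edge; move: pI; case: (I) => [|i J] /= /andP[].
have /andP[e2 e1] := theta_chord x y L1 L2 I.
have R12 : connect link R1 R2.
  apply: connect_trans (cR2 _ _ _ e2 tP); rewrite connect_link_sym.
  exact: cR1 _ _ _ e1 (piece_through_sym tP).
exists R2 => u v Q uv tQ; have := theta_edges I uv; rewrite mem_cat.
by case/orP=> [/cR1/(_ tQ)/connect_trans->|/cR2->].
Qed.

Lemma mixed_cycle_chord g A h B :
  uniq (g :: A ++ h :: B) -> cycle K (g :: A ++ h :: B) ->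
  g \in VG -> g \notin S -> h \in VH -> h \notin S ->
  exists z1 I z2, [/\ z1 \in A, z2 \in B & {subset I <= S}] /\
    [/\ path K z1 (rcons I z2), uniq (z1 :: rcons I z2) & all [predC g :: A ++ h :: B] I].
Proof.
move=> us cs gG gS hH hS.
have /andP[pA pB] : path K g (rcons A h) && path K h (rcons B g).
  by move: cs; rewrite /= rcons_cat /= -cat_rcons cat_path last_rcons.
have [_ [x0 _ ->] meetC] := aux_separation gG gS hH hS pA (last_rcons _ _ _).
have meet q : path K g (rcons q h) ->
    exists2 a, a \in q & (a \in S) && connect (irel S eS) x0 a.
  move=> pq; have /hasP[a] := meetC _ pq (last_rcons _ _ _).
  rewrite mem_rcons !inE => /orP[/eqP->|aq]; first by rewrite (negbTE hS).
  by exists a.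
have [a aA /andP[aS x0a]] := meet _ pA.
have [b + /andP[bS x0b]] := meet _ (path_rcons_rev K_sym pB); rewrite mem_rev => bB.
have /connect_irel_path[//|Q [pQ lQ uQ QS]] : connect (irel S eS) a b.
  by apply: connect_trans _ x0b; rewrite connect_irel_sym //; apply: eS_sym.
have nAB y : y \in A -> y \notin B.
  move: us; rewrite cons_uniq cat_uniq => /andP[_ /and3P[_ /hasPn dAB _]] yA.
  by apply: contraL yA => yB; apply: dAB; rewrite inE yB orbT.
have pQK : path K a Q by apply: sub_path pQ => u v /and3P[_ _ e]; rewrite /sum_rel /= e.
have [z1 [I [z2 [[z1A z2B nI] [IQ pI uI]]]]] :=
  path_crossing (A := mem A) (B := mem B) nAB pQK uQ aA (etrans (congr1 _ lQ) bB).
exists z1, I, z2; split; split=> //.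
  by move=> v /IQ /QS.
apply/allP => v vI; have vS := QS v (IQ v vI).
have [vA vB] : v \notin A /\ v \notin B by apply/norP; apply: (allP nI).
have [vg vh] : v != g /\ v != h by split; apply: contraTneq vS => ->.
by rewrite !inE mem_cat !inE (negbTE vg) (negbTE vh) (negbTE vA) (negbTE vB).
Qed.

Lemma coherent_mixed g A h B :
  (forall s, uniq s -> 2 <= size s -> cycle K s ->
     count [predC S] s < count [predC S] (g :: A ++ h :: B) -> coherent s) ->
  uniq (g :: A ++ h :: B) -> cycle K (g :: A ++ h :: B) ->
  g \in VG -> g \notin S -> h \in VH -> h \notin S -> coherent (g :: A ++ h :: B).
Proof.
move=> IH us cs gG gS hH hS.
have [z1 [I [z2 [[z1A z2B IS] [pI uI nI]]]]] := mixed_cycle_chord us cs gG gS hH hS.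
move: IH us cs nI; case/splitPr: z1A => A1 A2; case/splitPr: z2B => B1 B2 IH us cs nI.
set L1 := A2 ++ h :: B1; set L2 := B2 ++ g :: A1; set s' := z1 :: L1 ++ z2 :: L2.
have Es : g :: (A1 ++ z1 :: A2) ++ h :: B1 ++ z2 :: B2 = (g :: A1) ++ z1 :: L1 ++ z2 :: B2.
  by rewrite /L1 -!catA /=.
have Es' : s' = (z1 :: L1 ++ z2 :: B2) ++ g :: A1 by rewrite /s' /L2 /= -catA.
rewrite Es in IH us cs nI *; apply: coherent_catC; rewrite -Es'.
have us' : uniq s' by rewrite Es' uniq_catC.
have cs' : cycle K s' by rewrite Es' cycle_catC.
have cnt : count [predC S] s' = count [predC S] ((g :: A1) ++ z1 :: L1 ++ z2 :: B2).
  by rewrite Es' !count_cat addnC.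
have nI' : all [predC s'] I.
  by apply/allP => v /(allP nI) /=; rewrite Es' mem_cat orbC -mem_cat.
have I0 : count [predC S] I = 0.
  by rewrite (eq_in_count (a2 := pred0)) ?count_pred0 // => v /IS; rewrite !inE => ->.
have [L1S L2S] : 0 < count [predC S] L1 /\ 0 < count [predC S] L2.
  rewrite -!has_count; split; apply/hasP; [exists h | exists g];
    by rewrite ?inE ?hS ?gS // ?mem_cat inE eqxx ?orbT.
have /andP[us1 us2] := theta_uniq us' uI nI'.
have /andP[cs1 cs2] := theta_cycle K_sym cs' pI.
have [lt1 lt2] := theta_count z1 z2 I0 L1S L2S.
by apply: (coherent_chord pI); apply: IH; rewrite // -?cnt //= size_cat /= addnS ltnS.
Qed.

Lemma cycle_sum_sub s : cycle K s -> {subset s <= VG :|: VH}.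
Proof.
move=> cs v /(next_cycle cs); rewrite inE.
by case/orP=> [/eG_mem|/eH_mem] /andP[-> _]; rewrite ?orbT.
Qed.

Theorem cycle_coherent s : uniq s -> 2 <= size s -> cycle K s -> coherent s.
Proof.
have [n] := ubnP (count [predC S] s); elim: n s => // n IHn s.
move=> cnt us ss cs; case: (boolP (all (mem VG) s)) => [/allP sG|/allPn[h hs hG]].
  have [X pX sX] := cycle_in_piece us ss cs (or_introl sG).
  exact: coherent_in_piece pX sX cs.
case: (boolP (all (mem VH) s)) => [/allP sH|/allPn[g gs gH]].
  have [X pX sX] := cycle_in_piece us ss cs (or_intror sH).
  exact: coherent_in_piece pX sX cs.
have {}gH : g \notin VH := gH; have {}hG : h \notin VG := hG.
have gG : g \in VG by move: (cycle_sum_sub cs gs); rewrite inE (negbTE gH) orbF.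
have hH : h \in VH by move: (cycle_sum_sub cs hs); rewrite inE (negbTE hG).
have gS : g \notin S by apply: contra gH; apply: (subsetP SH).
have hS : h \notin S by apply: contra hG; apply: (subsetP SG).
have hg : h != g by apply: contraNneq hG => ->.
move: hs cnt us cs; case/splitPr: gs => A0 B0.
rewrite mem_cat inE (negbTE hg) orbC -mem_cat => hBA cnt us cs.
have cnt' : count [predC S] (g :: B0 ++ A0) = count [predC S] (A0 ++ g :: B0).
  by rewrite -cat_cons !count_cat addnC.
have us' : uniq (g :: B0 ++ A0) by rewrite -cat_cons uniq_catC.
have cs' : cycle K (g :: B0 ++ A0) by rewrite -cat_cons cycle_catC.
apply: coherent_catC => /=; move: cnt' us' cs'; case/splitPr: hBA => A B cnt' us' cs'.
apply: coherent_mixed => // s' us's ss' cs's lt; apply: IHn => //.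
by apply: leq_trans lt _; rewrite cnt' -ltnS.
Qed.

Section Reach.
Variable P1 : {set T}.
Hypothesis pP1 : piece P1.

Definition reach_set := \bigcup_(P | connect link P1 P) P.
Definition reach_rel : rel T :=
  fun x y => K x y && [exists P, [&& connect link P1 P, x \in P & y \in P]].

Lemma reach_piece P : connect link P1 P -> piece P.
Proof.
case/connectP=> ps + ->; elim: ps P1 pP1 => //= Q ps IH R _.
by case/andP=> /asboolP[_ pQ _]; apply: IH.
Qed.

Lemma reach_rel_sym : symmetric reach_rel.
Proof.
move=> x y; rewrite /reach_rel K_sym; congr (_ && _).
by apply: eq_existsb => P; rewrite andbA andbAC -andbA.
Qed.

Lemma reach_rel_mem x y : reach_rel x y -> (x \in reach_set) && (y \in reach_set).
Proof.
case/andP=> _ /existsP[P /and3P[rP xP yP]].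
by apply/andP; split; apply/bigcupP; exists P.
Qed.

Lemma path_reach_rel x p : path reach_rel x p -> {subset p <= reach_set}.
Proof.
elim: p x => //= y p IH x /andP[/reach_rel_mem/andP[_ yU] pyp] v.
by rewrite inE => /orP[/eqP->//|]; apply: (IH y pyp).
Qed.

Lemma connect_reach_rel_piece P x y : connect link P1 P -> x \in P -> y \in P ->
  connect reach_rel x y.
Proof.
move=> rP xP yP; have [[_ cP] _] := piece_conn_nocut (reach_piece rP).
apply: connect_sub (cP x y xP yP) => u v /and3P[uP vP euv]; apply: connect1.
by rewrite /reach_rel euv; apply/existsP; exists P; rewrite rP uP vP.
Qed.

Lemma connect_reach_rel x y : x \in reach_set -> y \in reach_set ->
  connect reach_rel x y.
Proof.
have [[/set0Pn[a aP1] _] _] := piece_conn_nocut pP1.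
suff from_a z : z \in reach_set -> connect reach_rel a z.
  move=> /from_a ax /from_a ay; apply: connect_trans ay.
  by rewrite (sym_connect_sym reach_rel_sym).
case/bigcupP=> P /connectP[ps pps ->].
elim/last_ind: ps z pps => [|ps Q IH] z /=.
  by move=> _ zP1; apply: connect_reach_rel_piece (connect0 _ _) aP1 zP1.
rewrite rcons_path last_rcons => /andP[pps lQ] zQ.
have /asboolP[_ _ [B [[_ [[/set0Pn[b bB] _] _] _] _] /subsetP sB]] := lQ.
have /setIP[bps bQ] := sB b bB.
apply: connect_trans (IH b pps bps) (connect_reach_rel_piece _ bQ zQ).
by apply/connectP; exists (rcons ps Q); rewrite ?last_rcons // rcons_path pps.
Qed.

Lemma reach_ear w1 w2 p P : w1 \in reach_set -> w2 \in reach_set ->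
  path K w1 (rcons p w2) -> uniq (w1 :: rcons p w2) -> {subset p <= ~: reach_set} ->
  piece_through w1 (head w2 p) P -> connect link P1 P.
Proof.
move=> w1U w2U pp up pU tP.
have /connectP[R0 pR0 lR0] := connect_reach_rel w2U w1U.
move: lR0; case/shortenP: pR0 => R pR uR _ {R0}.
case/lastP: R pR uR => [|R w] pR uR /= lR.
  by move: up; rewrite lR /= mem_rcons inE eqxx.
rewrite last_rcons in lR; subst w.
have RU := path_reach_rel pR.
have us : uniq (w1 :: p ++ w2 :: R).
  apply: (uniq_ear up uR) => v vR; apply/negP => /pU.
  by rewrite inE RU // mem_rcons inE vR orbT.
have cs : cycle K (w1 :: p ++ w2 :: R).
  by apply: cycle_ear pp (sub_path _ pR) => x y /andP[].
have ss : 2 <= size (w1 :: p ++ w2 :: R) by rewrite /= size_cat addnS.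
have [R1 cR1] := cycle_coherent us ss cs.
have /andP[_ /existsP[Q /and3P[rQ wQ hQ]]] : reach_rel w2 (head w1 R).
  by move: pR; case: (R) => [|r R'] /= /andP[].
have tQ : piece_through w2 (head w1 R) Q by split=> //; apply: reach_piece.
apply: connect_trans rQ _; apply: connect_trans (cR1 _ _ _ (cycle_edges_mid _ _ _ _) tQ) _.
rewrite connect_link_sym; apply: cR1 tP.
by have := cycle_edges_head w1 (p ++ w2 :: R); case: (p).
Qed.

Lemma reach_block F a b : is_block (VG :|: VH) K F ->
  a \in P1 :&: F -> b \in P1 :&: F -> a != b -> F \subset reach_set.
Proof.
move=> [_ cnF _] /setIP[aP1 aF] /setIP[bP1 bF] ab; apply/negPn/negP => nFU.
have P1U : P1 \subset reach_set by apply: bigcup_sup.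
have [aFU bFU] : a \in F :&: reach_set /\ b \in F :&: reach_set.
  by rewrite !inE aF bF !(subsetP P1U).
have [w1 [w2 [p [[w1U w2U p0 pU] /andP[pp up]]]]] :=
  conn_nocut_ear K_sym cnF aFU bFU ab nFU.
case: p p0 pp up pU => // d p _ pp up pU.
have [P tP] : exists P, piece_through w1 d P by apply: piece_of_edge; case/andP: pp.
have : d \in reach_set.
  by apply/bigcupP; exists P; [exact: (reach_ear w1U w2U pp up pU tP) | case: tP].
by have := pU d (mem_head _ _); rewrite inE => /negbTE->.
Qed.

End Reach.

Lemma boundary_block_edge B : boundary_block B ->
  exists a b, [/\ a \in B, b \in B & eS a b].
Proof.
case=> -[_ [[_ cB] _] _] /card_gt1P[a [b [aB bB ab]]].
case/connectP: (cB a b aB bB) => [[|c p]] /=; first by move=> _ abE; rewrite abE eqxx in ab.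
by case/andP=> /and3P[_ cB' eac] _ _; exists a, c.
Qed.

Lemma boundary_block_Sblock B X : boundary_block B -> piece X -> B \subset X ->
  is_S_block VG eG S X \/ is_S_block VH eH S X.
Proof.
move=> bB pX /subsetP sBX; have [a [b [aB bB' /and3P[aS bS eab]]]] := boundary_block_edge bB.
case: pX => bX; [left | right]; split=> //; exists a, b; rewrite ?sBX //.
by rewrite -eGH_S.
Qed.

Lemma boundary_block_in_piece B : boundary_block B -> exists2 P, piece P & B \subset P.
Proof.
case=> -[sBS cnB _] _.
have cnG : conn_nocut B eG by apply: (conn_nocut_sub _ cnB) => x y _ _ /and3P[].
by have [P bP sBP] := block_exists cnG (subset_trans sBS SG); exists P => //; left.
Qed.

Section Value.
Variables (A : Type) (f : {set T} -> A).
Hypothesis f_Sblock : forall B1 B2,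
  is_block S eS B1 -> 1 < #|B1| -> is_block S eS B2 -> 1 < #|B2| ->
  (exists X, [/\ is_S_block VG eG S X, B1 \subset X & B2 \subset X]) \/
  (exists X, [/\ is_S_block VH eH S X, B1 \subset X & B2 \subset X]) ->
  f B1 = f B2.

Lemma piece_value X B B' : piece X -> boundary_block B -> B \subset X ->
  boundary_block B' -> B' \subset X -> f B = f B'.
Proof.
move=> pX bB sBX bB' sB'X; have [[bB1 gB1] [bB2 gB2]] := (bB, bB').
by apply: f_Sblock => //; case: (boundary_block_Sblock bB pX sBX) => ?; [left | right]; exists X.
Qed.

Lemma link_value P Q B B' : piece P -> connect link P Q ->
  boundary_block B -> B \subset P -> boundary_block B' -> B' \subset Q -> f B = f B'.
Proof.
move=> pP /connectP[ps + ->]; elim: ps P pP B => [|R ps IH] P pP B /=.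
  by move=> _; apply: piece_value.
case/andP=> /asboolP[_ pR [B0 bB0 /subsetP sB0]] pRps bB sBP bB' sB'.
rewrite (piece_value pP bB sBP bB0); last by apply/subsetP => x /sB0 /setIP[].
apply: IH pRps bB0 _ bB' sB' => //; by apply/subsetP => x /sB0 /setIP[].
Qed.

Lemma Sblock_value F B1 B2 : is_block (VG :|: VH) K F ->
  boundary_block B1 -> boundary_block B2 -> B1 \subset F -> B2 \subset F -> f B1 = f B2.
Proof.
move=> bF bB1 bB2 /subsetP sB1F /subsetP sB2F.
have [P1 pP1 /subsetP sB1P1] := boundary_block_in_piece bB1.
have [P2 pP2 /subsetP sB2P2] := boundary_block_in_piece bB2.
have [_ /card_gt1P[a1 [b1 [a1B b1B a1b1]]]] := bB1.
have /subsetP FU : F \subset reach_set P1.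
  by apply: (reach_block pP1 bF _ _ a1b1); rewrite inE ?sB1P1 ?sB1F.
have [u [v [uB2 vB2 /andP[_ /andP[_ euv]]]]] := boundary_block_edge bB2.
have P12 : connect link P1 P2.
  apply: (reach_ear pP1 (w1 := u) (w2 := v) (p := [::])); rewrite ?FU ?sB2F //=.
  - by rewrite /sum_rel /= euv.
  - by rewrite inE andbT; apply: K_neq; rewrite /sum_rel /= euv.
  - by split; rewrite ?sB2P2.
by apply: link_value pP1 P12 bB1 _ bB2 _; apply/subsetP.
Qed.
End Value.
End SumGraph.

Theorem lemma3p5 (A : Type) (T : finType) (d : nat)
  (VG : {set T}) (eG : rel T) (lG : T -> 'I_d)
  (VH : {set T}) (eH : rel T) (lH : T -> 'I_d)
  (S : {set T}) (g : {set T} -> A) :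
  (* (G,S) and (H,S) are d-labeled boundaried graphs *)
  graph_wf VG eG -> graph_wf VH eH ->
  S \subset VG -> S \subset VH ->
  block_labeling VG eG lG -> block_labeling VH eH lH ->
  (* compatibility *)
  VG :&: VH \subset S ->
  {in S &, forall x y, eG x y = eH x y} ->
  {in S, forall x, lG x = lH x} ->
  (* (i) every S-block of G or of H is chordal *)
  (forall X, is_S_block VG eG S X -> chordal X eG) ->
  (forall X, is_S_block VH eH S X -> chordal X eH) ->
  (* (ii) Aux(G,S) (+) Aux(H,S) has no cycles *)
  aux_sum_acyclic VG eG VH eH S ->
  (* (iii) g constant on blocks of G[S] (>= 2 vertices) lying in a common
     S-block of G or of H *)
  (forall B1 B2, is_block S (irel S eG) B1 -> 1 < #|B1| ->
                 is_block S (irel S eG) B2 -> 1 < #|B2| ->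
     (exists X, [/\ is_S_block VG eG S X, B1 \subset X & B2 \subset X]) \/
     (exists X, [/\ is_S_block VH eH S X, B1 \subset X & B2 \subset X]) ->
     g B1 = g B2) ->
  forall F B1 B2,
    is_S_block (VG :|: VH) (sum_rel eG eH) S F ->
    is_block S (irel S eG) B1 -> 1 < #|B1| ->
    is_block S (irel S eG) B2 -> 1 < #|B2| ->
    B1 \subset F -> B2 \subset F ->
    g B1 = g B2.
Proof.
move=> wfG wfH SG SH _ _ GHS eGH_S _ _ _ acyc g_Sblock.
move=> F B1 B2 [bF _] bB1 B1gt1 bB2 B2gt1 sB1F sB2F.
exact: (Sblock_value wfG wfH SG SH GHS eGH_S acyc g_Sblock bF).
Qed.
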